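(* There is a finite magma satisfying $\mathrm{x}\simeq\mathrm{y}\diamond((\mathrm{y}\diamond(\mathrm{x}\diamond\mathrm{x}))\diamond\mathrm{y})$ but not $\mathrm{x}\simeq(\mathrm{x}\diamond\mathrm{x})\diamond((\mathrm{x}\diamond\mathrm{x})\diamond\mathrm{x})$. In particular, the first law does not imply the second, even for finite magmas.
   Context: A magma is a set with a binary operation $\diamond$; it satisfies a law if the identity holds for all assignments of the variables to elements of the magma. *)

From mathcomp Require Import all_boot.

Definition satisfies_law1 (T : Type) (op : T -> T -> T) : Prop :=
  forall x y : T, x = op y (op (op y (op x x)) y).

Definition satisfies_law2 (T : Type) (op : T -> T -> T) : Prop :=
  forall x : T, x = op (op x x) (op (op x x) x).

From mathcomp Require Import all_boot ssralg zmodp ring.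

(* The magma is a twisted square of the linear magma [x * y = 3x + 4y] on
   Z/5, which satisfies both laws: on pairs,
   [(a, x) * (b, y) = (3a + 4b, 3x + 4y + phi a b)].  The first coordinate
   is the linear magma itself, and on the second coordinate the linear parts
   of both laws again cancel, so each law holds exactly when a certain linear
   combination of values of [phi] vanishes.  A suitable table [phi] makes the
   first combination vanish identically but not the second. *)

Set Implicit Arguments.
Unset Strict Implicit.
Unset Printing Implicit Defensive.

Import GRing.Theory.
Local Open Scope ring_scope.

Section TwistedLinearMagma.

Variable R : comPzRingType.
Hypothesis char5 : 5%:R = 0 :> R.
Variable phi : R -> R -> R.

Definition twisted_op (u v : R * R) : R * R :=
  (3 * u.1 + 4 * v.1, 3 * u.2 + 4 * v.2 + phi u.1 v.1).

Definition law1_cocycle (a b : R) : R :=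
  3 * phi a a + 2 * phi b (2 * a) + 4 * phi (3 * a + 3 * b) b + phi b (4 * a + 3 * b).

Definition law2_defect (a : R) : R := 4 * phi (2 * a) a + phi (2 * a) 0.

Lemma eq_char5 (p q k : R) : p = q + 5%:R * k -> p = q.
Proof. by rewrite char5 mul0r addr0. Qed.

Lemma twisted_law1_expand (x y : R * R) :
  twisted_op y (twisted_op (twisted_op y (twisted_op x x)) y)
  = (x.1, x.2 + law1_cocycle x.1 y.1).
Proof.
case: x y => [a x] [b y]; rewrite /twisted_op /law1_cocycle /=.
have -> : 3 * a + 4 * a = 2 * a by apply: (eq_char5 (k := a)); ring.
have -> : 3 * b + 4 * (2 * a) = 3 * a + 3 * b by apply: (eq_char5 (k := a)); ring.
have -> : 3 * (3 * a + 3 * b) + 4 * b = 4 * a + 3 * b.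
  by apply: (eq_char5 (k := a + 2 * b)); ring.
congr pair; first by apply: (eq_char5 (k := 3 * a + 3 * b)); ring.
apply: (eq_char5 (k := 11 * y + 67 * x + 9 * phi a a + 2 * phi b (2 * a))); ring.
Qed.

Lemma twisted_law2_expand (x : R * R) :
  twisted_op (twisted_op x x) (twisted_op (twisted_op x x) x)
  = (x.1, x.2 + law2_defect x.1).
Proof.
case: x => [a x]; rewrite /twisted_op /law2_defect /=.
have -> : 3 * a + 4 * a = 2 * a by apply: (eq_char5 (k := a)); ring.
have -> : 3 * (2 * a) + 4 * a = 0 by apply: (eq_char5 (k := 2 * a)); ring.
congr pair; first by apply: (eq_char5 (k := a)); ring.
apply: (eq_char5 (k := 24 * x + 3 * phi a a)); ring.
Qed.

Lemma twisted_law1P :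
  satisfies_law1 _ twisted_op <-> forall a b, law1_cocycle a b = 0.
Proof.
split=> [law1 a b | cocycle0 x y].
  have /(congr1 snd) := law1 (a, 0) (b, 0).
  by rewrite twisted_law1_expand /= add0r => <-.
by rewrite twisted_law1_expand cocycle0 addr0; case: x.
Qed.

Lemma twisted_law2P :
  satisfies_law2 _ twisted_op <-> forall a, law2_defect a = 0.
Proof.
split=> [law2 a | defect0 x].
  have /(congr1 snd) := law2 (a, 0).
  by rewrite twisted_law2_expand /= add0r => <-.
by rewrite twisted_law2_expand defect0 addr0; case: x.
Qed.

End TwistedLinearMagma.

Definition twist_table : seq (seq nat) :=
  [:: [:: 2; 4; 3; 1; 3];
      [:: 1; 1; 1; 2; 0];
      [:: 1; 3; 3; 2; 3];
      [:: 2; 0; 2; 0; 0];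
      [:: 1; 0; 0; 0; 0]].

Definition twist (a b : 'Z_5) : 'Z_5 := (nth 0 (nth [::] twist_table a) b)%:R.

Lemma twist_law1_cocycle (a b : 'Z_5) : law1_cocycle twist a b = 0.
Proof.
by apply/eqP; case: a b => [[|[|[|[|[|//]]]]] ?] [[|[|[|[|[|//]]]]] ?].
Qed.

Lemma twist_law2_defect1 : law2_defect twist 1 != 0.
Proof. by []. Qed.

Theorem mainTheorem4 :
  exists (T : finType) (op : T -> T -> T),
    satisfies_law1 T op /\ ~ satisfies_law2 T op.
Proof.
have char5 : 5%:R = 0 :> 'Z_5 by apply/eqP.
exists ('Z_5 * 'Z_5)%type, (twisted_op twist); split.
  exact/(twisted_law1P char5)/twist_law1_cocycle.
move=> /(twisted_law2P char5) defect0.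
by have := twist_law2_defect1; rewrite defect0 eqxx.
Qed.
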